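(* Let $s$ be a degree sequence and $G,H\in\mathcal{P}(s)$. Then $\operatorname{cycles}(G)=\kappa(G)$ if and only if $\operatorname{cycles}(H)=\kappa(H)$.
   Context: Graphs are finite, simple, labeled with vertex set $[n]$; the degree sequence of $G$ is $(d_1,\dots,d_n)$ with $d_i$ the degree of vertex $i$. A pseudoforest is a graph each of whose connected components contains at most one cycle; $\mathcal{P}(s)$ is the set of pseudoforests with degree sequence $s$. $\kappa(G)$ is the number of connected components and $\operatorname{cycles}(G)$ the number of subgraphs of $G$ isomorphic to a cycle. *)

From mathcomp Require Import all_boot.
Set Implicit Arguments. Unset Strict Implicit. Unset Printing Implicit Defensive.

(* A finite simple labeled graph on vertex set [n] = 'I_n is given by its
   edge set: a set of unordered pairs {i,j} with i <> j. *)
Definition graph (n : nat) := {set {set 'I_n}}.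

Definition simple_graph n (G : graph n) : Prop :=
  forall e, e \in G -> #|e| = 2.

Definition adj n (G : graph n) : rel 'I_n := fun x y => [set x; y] \in G.

Definition deg n (G : graph n) (i : 'I_n) : nat := #|[set e in G | i \in e]|.

Definition comp n (G : graph n) (x : 'I_n) : {set 'I_n} :=
  [set y | connect (adj G) x y].

Definition kappa n (G : graph n) : nat := #|[set comp G x | x : 'I_n]|.

(* F is the edge set of a cycle: there are k >= 3 distinct vertices
   v_0, ..., v_{k-1} (encoded as an injective f : 'I_k -> 'I_n; k <= n
   necessarily, hence k : 'I_n.+1) such that F = { v_i v_{i+1 mod k} : i < k }.
   A subgraph isomorphic to a cycle is determined by its edge set
   (its vertex set is the union of its edges). *)
Definition is_cycle_edges n (F : {set {set 'I_n}}) : bool :=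
  [exists k : 'I_n.+1, exists f : {ffun 'I_k -> 'I_n},
    [&& 3 <= k, injectiveb f &
        F == [set [set f i; f (ordS i)] | i : 'I_k]]].

Definition cycle_subgraphs n (G : graph n) : {set {set {set 'I_n}}} :=
  [set F : {set {set 'I_n}} | (F \subset G) && is_cycle_edges F].

Definition cycles n (G : graph n) : nat := #|cycle_subgraphs G|.

Definition pseudoforest n (G : graph n) : Prop :=
  forall x : 'I_n,
    #|[set F in cycle_subgraphs G | [forall e in F, e \subset comp G x]]| <= 1.

Definition has_degree_sequence n (G : graph n) (s : 'I_n -> nat) : Prop :=
  forall i, deg G i = s i.

Definition in_P n (s : 'I_n -> nat) (G : graph n) : Prop :=
  [/\ simple_graph G, pseudoforest G & has_degree_sequence G s].

From Pilot Require Import Defs.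
From mathcomp Require Import all_boot zify.
Set Implicit Arguments. Unset Strict Implicit. Unset Printing Implicit Defensive.

(* For a pseudoforest G on n vertices, |E(G)| + kappa(G) = n + cycles(G), by induction on
   the edges.  Deleting an edge uv either leaves u and v connected, so kappa is unchanged
   and, as the component of u carries at most one cycle, exactly the one cycle through uv
   is lost; or it disconnects them, so kappa grows by one and no cycle passed through uv.
   Hence cycles(G) = kappa(G) iff |E(G)| = n, and by the handshake lemma |E(G)| is half
   the sum of the degree sequence. *)

Lemma set2_inj (T : finType) (u v a b : T) : u != v -> [set u; v] = [set a; b] ->
  (a = u /\ b = v) \/ (a = v /\ b = u).
Proof.
move=> uv E.
have /set2P[au|av] : a \in [set u; v] by rewrite E set21.
- left; split=> //; subst a.
  have /set2P[vu|//] : v \in [set u; b] by rewrite -E set22.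
  by rewrite vu eqxx in uv.
- right; split=> //; subst a.
  have /set2P[uv'|//] : u \in [set v; b] by rewrite -E set21.
  by rewrite uv' eqxx in uv.
Qed.

Lemma connect_walk (T : finType) (r : rel T) (g : nat -> T) a t :
  (forall j, a <= j < a + t -> r (g j) (g j.+1)) -> connect r (g a) (g (a + t)).
Proof.
elim: t => [|t IH] step; first by rewrite addn0 connect0.
rewrite addnS; apply: connect_trans (IH _) (connect1 (step _ _)); last lia.
by move=> j ?; apply: step; lia.
Qed.

Section Connectivity.
Variables (n : nat) (G : graph n).

Lemma adj_sym : symmetric (adj G).
Proof. by move=> x y; rewrite /adj setUC. Qed.

Lemma connect_adj_sym : connect_sym (adj G).
Proof. exact/sym_connect_sym/adj_sym. Qed.

Lemma comp_refl x : x \in Defs.comp G x.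
Proof. by rewrite inE connect0. Qed.

Lemma comp_eq x y : connect (adj G) x y -> Defs.comp G x = Defs.comp G y.
Proof.
move=> cxy; apply/setP=> z; rewrite !inE.
by apply/idP/idP; apply: connect_trans; rewrite // connect_adj_sym.
Qed.

Lemma connect_setD1 e x y : connect (adj (G :\ e)) x y -> connect (adj G) x y.
Proof. by apply: connect_sub => a b /setD1P[_ ?]; apply: connect1. Qed.

End Connectivity.

Section EdgeDeletion.
Variables (n : nat) (G : graph n) (u v : 'I_n).
Hypothesis uv : u != v.
Local Notation G' := (G :\ [set u; v]).

Lemma connect_setD1_edge x y : connect (adj G) x y ->
  [|| connect (adj G') x y,
      connect (adj G') x u && connect (adj G') v y |
      connect (adj G') x v && connect (adj G') u y].
Proof.
case/connectP=> p + ->; elim: p x => [|z p IH] x /=; first by rewrite connect0.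
case/andP=> xz /IH; have [xz'|] := boolP (adj G' x z).
  by case/or3P=> [h1|/andP[h1 h2]|/andP[h1 h2]];
    rewrite (connect_trans (connect1 xz') h1) ?h2 ?orbT.
move=> /negbTE xz'.
have /eqP/esym/(set2_inj uv)[[-> ->]|[-> ->]] : [set x; z] == [set u; v].
  by apply: contraFT xz'; rewrite /adj in_setD1 => ->.
all: by case/or3P=> [h|/andP[_ h]|/andP[_ h]]; rewrite ?connect0 h ?orbT.
Qed.

Lemma kappa_setD1_nonbridge : connect (adj G') u v -> kappa G' = kappa G.
Proof.
move=> cuv; suff sameC : Defs.comp G' =1 Defs.comp G.
  by rewrite /kappa (eq_imset _ sameC).
move=> x; apply/setP=> y; rewrite !inE; apply/idP/idP; first exact: connect_setD1.
case/connect_setD1_edge/or3P=> [//|/andP[h1 h2]|/andP[h1 h2]].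
  exact: connect_trans (connect_trans h1 cuv) h2.
by apply: connect_trans (connect_trans h1 _) h2; rewrite connect_adj_sym.
Qed.

Section Bridge.
Hypotheses (uvG : [set u; v] \in G) (bridge : ~~ connect (adj G') u v).
Local Notation Cu := (Defs.comp G' u).
Local Notation Cv := (Defs.comp G' v).

Lemma comp_setD1_bridge_out x : x \notin Cu :|: Cv -> Defs.comp G x = Defs.comp G' x.
Proof.
rewrite !inE negb_or => /andP[xu xv]; apply/setP=> y; rewrite !inE.
apply/idP/idP; last exact: connect_setD1.
case/connect_setD1_edge/or3P=> [//|/andP[h _]|/andP[h _]].
  by rewrite connect_adj_sym h in xu.
by rewrite connect_adj_sym h in xv.
Qed.

Lemma comp_bridge : Defs.comp G u = Cu :|: Cv.
Proof.
apply/setP=> y; rewrite !inE; apply/idP/orP.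
  case/connect_setD1_edge/or3P=> [->|/andP[_ ->]|/andP[uv' _]]; [by left|by right|].
  by move: bridge; rewrite uv'.
case=> /connect_setD1 //; apply: connect_trans; exact: connect1.
Qed.

Lemma comp_setD1_bridge_in x : x \in Cu :|: Cv -> Defs.comp G x = Cu :|: Cv.
Proof.
rewrite -comp_bridge => ux; apply: esym; apply: comp_eq.
by rewrite inE in ux.
Qed.

Lemma kappa_setD1_bridge : kappa G' = (kappa G).+1.
Proof.
set X := Cu :|: Cv; set R := [set Defs.comp G' x | x in ~: X].
have uX : u \in X by rewrite !inE connect0.
have comps_G : [set Defs.comp G x | x : 'I_n] = X |: R.
  apply/setP=> Z; apply/imsetP/setU1P=> [[x _ ->]|[->|/imsetP[x]]].
  - have [xX|xX] := boolP (x \in X); first by left; apply: comp_setD1_bridge_in.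
    by right; rewrite comp_setD1_bridge_out //; apply: imset_f; rewrite inE.
  - by exists u => //; rewrite comp_setD1_bridge_in.
  - by rewrite inE => xX ->; exists x => //; rewrite comp_setD1_bridge_out.
have comps_G' : [set Defs.comp G' x | x : 'I_n] = Cu |: (Cv |: R).
  apply/setP=> Z; apply/imsetP/setU1P=> [[x _ ->]|[->|/setU1P[->|/imsetP[x _ ->]]]].
  - have [xX|xX] := boolP (x \in X); last first.
      by right; apply/setU1P; right; apply: imset_f; rewrite inE.
    case/setUP: xX; rewrite inE connect_adj_sym => /comp_eq ->; first by left.
    by right; rewrite setU11.
  - by exists u.
  - by exists v.
  - by exists x.
have notin_R (Y : {set 'I_n}) : Y \subset X -> Y \notin R.
  move=> YX; apply/imsetP=> -[y]; rewrite inE => /negP yX YE.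
  by apply/yX/(subsetP YX); rewrite YE comp_refl.
have CuCv : Cu != Cv.
  apply: contraNneq bridge => CuE.
  by have := comp_refl G' u; rewrite CuE inE connect_adj_sym.
rewrite /kappa comps_G comps_G' !cardsU1 !notin_R ?subsetUl ?subsetUr //.
by rewrite in_setU1 (negbTE CuCv) notin_R ?subsetUl.
Qed.

End Bridge.

End EdgeDeletion.

Lemma modn_addn_neq k a d : 0 < d < k -> (a + d == a %[mod k]) = false.
Proof.
case/andP=> d_gt0 d_lt.
by rewrite -{2}[a]addn0 eqn_modDl mod0n modn_small // eqn0Ngt d_gt0.
Qed.

Section CyclicIndexing.
Variables (n k : nat) (k_gt0 : 0 < k) (f : 'I_k -> 'I_n).

Definition cyc (j : nat) : 'I_n := f (Ordinal (ltn_pmod j k_gt0)).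

Lemma cyc_ord (i : 'I_k) : cyc i = f i.
Proof. by rewrite /cyc; congr f; apply: val_inj; rewrite /= modn_small. Qed.

Lemma cyc_ordS (i : 'I_k) : f (ordS i) = cyc i.+1.
Proof. by rewrite /cyc; congr f; apply: val_inj. Qed.

Lemma cyc_addn j : cyc (j + k) = cyc j.
Proof. by rewrite /cyc; congr f; apply: val_inj; rewrite /= modnDr. Qed.

Lemma cyc_edge j : [set cyc j; cyc j.+1] \in [set [set f i; f (ordS i)] | i : 'I_k].
Proof.
apply/imsetP; exists (Ordinal (ltn_pmod j k_gt0)) => //.
by congr [set _; f _]; apply: val_inj; rewrite /= -[in RHS]addn1 modnDml addn1.
Qed.

Lemma connect_cyc (r : rel 'I_n) : (forall j, r (cyc j) (cyc j.+1)) ->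
  forall a b : 'I_k, connect r (f a) (f b).
Proof.
move=> step a b; rewrite -!cyc_ord -[cyc b]cyc_addn.
have -> : b + k = a + (b + k - a) by have := ltn_ord a; lia.
exact: connect_walk.
Qed.

Hypotheses (k_gt2 : 2 < k) (f_inj : injective f).

Lemma cyc_inj a b : cyc a = cyc b -> a = b %[mod k].
Proof. by move/f_inj/(congr1 val). Qed.

Lemma eq_cyc_edge a b : [set cyc a; cyc a.+1] = [set cyc b; cyc b.+1] -> a = b %[mod k].
Proof.
have ab1 : cyc a != cyc a.+1.
  by apply/eqP=> /esym/cyc_inj/eqP; rewrite -addn1 modn_addn_neq //; lia.
case/(set2_inj ab1) => [[/cyc_inj + _]|[/cyc_inj ba1 /cyc_inj b1a]] //.
(* Otherwise the edge is traversed backwards, so 2 = 0 modulo k. *)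
have /eqP : a + 2 = a %[mod k].
  by rewrite -b1a -[b.+1]addn1 -[in RHS]modnDml ba1 modnDml addn1 addn2.
by rewrite (modn_addn_neq a (d := 2)) //; lia.
Qed.
End CyclicIndexing.

Section CycleSubgraphs.
Variables (n : nat) (G : graph n).

Lemma cycle_subgraph_comp F e x : F \in cycle_subgraphs G -> e \in F -> x \in e ->
  [forall e' in F, e' \subset Defs.comp G x].
Proof.
rewrite inE => /andP[FG /existsP[k /existsP[f /and3P[k_gt2 _ /eqP F_def]]]]; subst F.
have k_gt0 : 0 < k by lia.
have steps (j : nat) : adj G (cyc k_gt0 f j) (cyc k_gt0 f j.+1).
  by rewrite /adj; apply: (subsetP FG); apply: cyc_edge.
case/imsetP=> i _ -> xi; apply/forall_inP=> _ /imsetP[j _ ->]; apply/subsetP=> y.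
by move: xi; rewrite !inE => /orP[]/eqP-> /orP[]/eqP->; apply: connect_cyc.
Qed.

Lemma cycle_subgraph_edge_connect F u v : u != v -> F \in cycle_subgraphs G ->
  [set u; v] \in F -> connect (adj (G :\ [set u; v])) u v.
Proof.
move=> uv; rewrite inE => /andP[FG /existsP[k /existsP[f]]].
case/and3P=> k_gt2 /injectiveP f_inj /eqP F_def; subst F.
have k_gt0 : 0 < k by lia.
set g := cyc k_gt0 f.
case/imsetP=> i _; rewrite cyc_ordS -cyc_ord -/g => uvE.
have steps j : i.+1 <= j < i.+1 + k.-1 -> adj (G :\ [set u; v]) (g j) (g j.+1).
  move=> ij; rewrite /adj in_setD1 (subsetP FG _ (cyc_edge _ _ _)) andbT uvE.
  apply/eqP=> /(eq_cyc_edge k_gt2 f_inj)/eqP.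
  by rewrite -(subnKC (ltnW (proj1 (andP ij)))) modn_addn_neq //; lia.
(* Walk once around the cycle, from g i.+1 to g (i + k) = g i. *)
have := connect_walk steps; rewrite addSn -addnS prednK // /g cyc_addn -/g.
by case: (set2_inj uv uvE) => -[-> ->] //; rewrite connect_adj_sym.
Qed.

Lemma cycle_subgraph_of_cycle x p : uniq (x :: p) -> 1 < size p ->
  cycle (adj G) (x :: p) -> exists2 F, F \in cycle_subgraphs G & [set last x p; x] \in F.
Proof.
move=> q_uniq p_gt1 q_cycle; set q := x :: p.
have k_lt : size q < n.+1.
  by rewrite ltnS -(card_uniqP q_uniq) -[n in _ <= n]card_ord max_card.
set k := size q.
pose f := [ffun i : 'I_k => nth x q i].
have f_inj : injective f.
  by move=> i j; rewrite !ffunE => /eqP; rewrite nth_uniq // => /eqP/val_inj.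
have edges (i : 'I_k) : [set f i; f (ordS i)] \in G.
  have := pathP x q_cycle i; rewrite size_rcons ltn_ord -rcons_cons !nth_rcons_default.
  move=> /(_ isT); suff -> : f (ordS i) = nth x p i by rewrite ffunE.
  rewrite ffunE /=; have [i_lt|i_ge] := ltnP i.+1 k; first by rewrite modn_small.
  have i_eq : i.+1 = k by have := ltn_ord i; lia.
  by rewrite i_eq modnn /= nth_default //; move: i_eq; rewrite /k /=; lia.
exists [set [set f i; f (ordS i)] | i : 'I_(Ordinal k_lt)].
  rewrite inE; apply/andP; split; first by apply/subsetP=> _ /imsetP[i _ ->].
  apply/existsP; exists (Ordinal k_lt); apply/existsP; exists f.
  by rewrite /= ltnS p_gt1 eqxx andbT; apply/injectiveP.
apply/imsetP; exists (Ordinal (ltnSn (size p))) => //.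
by rewrite !ffunE /= modnn -[size p]/(size q).-1 nth_last.
Qed.

Lemma cycle_subgraph_through_edge u v : u != v -> [set u; v] \in G ->
  connect (adj (G :\ [set u; v])) u v ->
  exists2 F, F \in cycle_subgraphs G & [set u; v] \in F.
Proof.
move=> uv uvG /connectP[p0 p0_path].
case: (shortenP p0_path) => p p_path p_uniq _ v_last.
have p_gt1 : 1 < size p.
  case: p p_path v_last {p_uniq} => [|w [|? ?]] //=.
    by move=> _ uvE; rewrite uvE eqxx in uv.
  by rewrite andbT => + vw; rewrite -vw /adj in_setD1 eqxx.
have [|F FG] := cycle_subgraph_of_cycle p_uniq p_gt1.
  rewrite /= rcons_path -v_last adj_sym /adj uvG andbT.
  by apply: sub_path p_path => a b /setD1P[].
by rewrite -v_last setUC; exists F.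
Qed.

End CycleSubgraphs.

Section Counting.
Variable n : nat.
Implicit Types G : graph n.

Lemma pseudoforest_setD1 G e : pseudoforest G -> pseudoforest (G :\ e).
Proof.
move=> pfG x; apply: leq_trans (pfG x); apply/subset_leq_card/subsetP=> F.
rewrite !inE subsetD1 => /andP[/andP[/andP[-> _] ->] /forall_inP F_comp] /=.
apply/forall_inP=> e' /F_comp/subsetP e'_comp; apply/subsetP=> y /e'_comp.
by rewrite !inE; apply: connect_setD1.
Qed.

Lemma cycles_setD1 G e :
  cycles G = cycles (G :\ e) + #|[set F in cycle_subgraphs G | e \in F]|.
Proof.
rewrite /cycles -(cardsID [set F : {set {set 'I_n}} | e \in F] (cycle_subgraphs G)) addnC.
by congr (_ + _); apply: eq_card=> F; rewrite !inE ?subsetD1 // andbCA andbA.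
Qed.

Lemma cycles_through_nonbridge G u v : pseudoforest G -> u != v -> [set u; v] \in G ->
  connect (adj (G :\ [set u; v])) u v ->
  #|[set F in cycle_subgraphs G | [set u; v] \in F]| = 1.
Proof.
move=> pfG uv uvG cuv; apply/eqP; rewrite eqn_leq; apply/andP; split.
  apply: leq_trans (pfG u); apply/subset_leq_card/subsetP=> F.
  rewrite in_set => /andP[FG uvF]; rewrite in_set FG /=.
  by apply: (cycle_subgraph_comp FG uvF); rewrite set21.
have [F FG uvF] := cycle_subgraph_through_edge uv uvG cuv.
by apply/card_gt0P; exists F; rewrite inE FG.
Qed.

Lemma cycles_through_bridge G u v : u != v -> ~~ connect (adj (G :\ [set u; v])) u v ->
  #|[set F in cycle_subgraphs G | [set u; v] \in F]| = 0.
Proof.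
move=> uv bridge; apply/eqP; rewrite cards_eq0; apply/eqP/setP=> F.
rewrite in_set in_set0.
by apply: contraNF bridge => /andP[FG uvF]; apply: cycle_subgraph_edge_connect FG uvF.
Qed.

Lemma cycles_set0 : cycles (set0 : graph n) = 0.
Proof.
apply/eqP; rewrite cards_eq0; apply/eqP/setP=> F; rewrite !inE.
apply/negP=> /andP[FG /existsP[k /existsP[f /and3P[k_gt2 _ /eqP F_def]]]].
have k_gt0 : 0 < k by lia.
have := cyc_edge k_gt0 f 0; rewrite -F_def => /(subsetP FG).
by rewrite inE.
Qed.

Lemma kappa_set0 : kappa (set0 : graph n) = n.
Proof.
have comp_set0 x : Defs.comp (set0 : graph n) x = [set x].
  apply/setP=> y; rewrite !inE; apply/idP/eqP=> [|->]; last exact: connect0.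
  by case/connectP=> -[|z p] /= => [_ ->|]; rewrite // /adj inE.
by rewrite /kappa (eq_imset _ comp_set0) card_imset ?card_ord //; apply: set1_inj.
Qed.

Lemma pseudoforest_card_edges G : simple_graph G -> pseudoforest G ->
  #|G| + kappa G = n + cycles G.
Proof.
move mE : #|G| => m; elim: m G mE => [|m IH] G mE sG pfG.
  by rewrite (cards0_eq mE) cycles_set0 kappa_set0 addn0.
have [e eG] : exists e, e \in G by apply/card_gt0P; rewrite mE.
have /cards2P[u [v [uv e_def]]] : #|e| == 2 by rewrite sG.
subst e; set G' := G :\ [set u; v].
have G'E : #|G'| = m by move: mE; rewrite (cardsD1 [set u; v]) eG => -[].
have sG' : simple_graph G' by move=> e /setD1P[_ /sG].
have := IH G' G'E sG' (pseudoforest_setD1 _ pfG).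
rewrite (cycles_setD1 G [set u; v]) -/G'.
have [cuv|bridge] := boolP (connect (adj G') u v).
  by rewrite kappa_setD1_nonbridge // cycles_through_nonbridge //; lia.
by rewrite kappa_setD1_bridge // cycles_through_bridge //; lia.
Qed.

Lemma cycles_eq_kappa G : simple_graph G -> pseudoforest G ->
  cycles G = kappa G <-> #|G| = n.
Proof. by move=> sG pfG; have := pseudoforest_card_edges sG pfG; split; lia. Qed.

Lemma sum_deg G : simple_graph G -> \sum_i deg G i = 2 * #|G|.
Proof.
move=> sG; transitivity (\sum_(e in G) #|e|).
  rewrite /deg; under eq_bigr do rewrite -sum1dep_card.
  rewrite (exchange_big_dep (mem G)) => [|i e _ /andP[] //] /=.
  apply: eq_bigr => e eG; rewrite sum1dep_card.
  by apply: eq_card => i; rewrite !inE eG.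
by under eq_bigr => e /sG -> do []; rewrite sum_nat_const mulnC.
Qed.

End Counting.

Theorem corollary5p3 (n : nat) (s : 'I_n -> nat) (G H : graph n) :
  in_P s G -> in_P s H ->
  (cycles G = kappa G <-> cycles H = kappa H).
Proof.
case=> sG pfG degG [sH pfH degH].
rewrite (cycles_eq_kappa sG pfG) (cycles_eq_kappa sH pfH).
suff -> : #|G| = #|H| by [].
apply/eqP; rewrite -(eqn_pmul2l (isT : 0 < 2)) -!sum_deg //.
by apply/eqP/eq_bigr=> i _; rewrite degG degH.
Qed.
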